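(* The dimension of the vector space $\mathcal{D}\cap (I_{\mathcal{C}})_2$ is $d-3$.
   Context: Let $P_d$ be a convex polygon with $d\ge 4$ vertices $v_1,\dots,v_d$ (indices mod $d$) over a field $\mathbb{K}$ with no three edge lines concurrent, and ${\bf v}_i=(v_i,1)\in\mathbb{K}^3$. In $S=\mathbb{K}[x_1,\ldots,x_d]$ let $\tau=\sum_i x_i{\bf v}_i=(\tau_1,\tau_2,\tau_3)$, $\mathcal{C}=\mathbb{V}(\tau_1,\tau_2,\tau_3)$ with ideal $I_{\mathcal{C}}=\langle\tau_1,\tau_2,\tau_3\rangle$, and $\mathcal{D}\subseteq S_2$ the span of diagonal monomials $x_ix_j$, $j\notin\{i-1,i,i+1\}$. *)

From HB Require Import structures.
From mathcomp Require Import all_boot all_order all_algebra.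
From mathcomp Require Import mpoly.
Set Implicit Arguments. Unset Strict Implicit. Unset Printing Implicit Defensive.
Import Order.TTheory GRing.Theory Num.Theory.
Local Open Scope ring_scope.

(* Points of the plane K^2 are pairs; indices of vertices are 'I_d, taken
   cyclically: the successor of i is [ordS i] (= i+1 mod d). *)

Definition orient (K : ringType) (a b c : K * K) : K :=
  (b.1 - a.1) * (c.2 - a.2) - (b.2 - a.2) * (c.1 - a.1).

(* v_0, ..., v_{d-1} (in this cyclic order) are the vertices of a convex
   polygon: for every edge [v_i, v_{i+1}], all other vertices lie strictly on
   one and the same side of its line, the side being the same for all edges
   (counterclockwise or clockwise orientation). *)
Definition convex_polygon (K : realFieldType) (d : nat) (v : 'I_d -> K * K) :=
  (forall i j : 'I_d, j != i -> j != ordS i -> 0 < orient (v i) (v (ordS i)) (v j))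
  \/
  (forall i j : 'I_d, j != i -> j != ordS i -> orient (v i) (v (ordS i)) (v j) < 0).

Definition on_edge_line (K : ringType) (d : nat) (v : 'I_d -> K * K)
  (i : 'I_d) (p : K * K) : Prop :=
  orient (v i) (v (ordS i)) p = 0.

Definition no_three_edge_lines_concurrent (K : ringType) (d : nat)
  (v : 'I_d -> K * K) : Prop :=
  forall i j k : 'I_d, i != j -> j != k -> i != k ->
    ~ (exists p : K * K,
        [/\ on_edge_line v i p, on_edge_line v j p & on_edge_line v k p]).

(* tau = sum_i x_i (v_i, 1) : the three linear forms tau_1, tau_2, tau_3 *)
Definition tau (K : ringType) (d : nat) (v : 'I_d -> K * K) (k : 'I_3)
  : {mpoly K[d]} :=
  \sum_(i < d) (match val k with
                | 0 => (v i).1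
                | 1 => (v i).2
                | _ => 1
                end) *: 'X_i.

(* membership in (I_C)_2, the degree-2 part of I_C = <tau_1, tau_2, tau_3> *)
Definition in_IC2 (K : ringType) (d : nat) (v : 'I_d -> K * K)
  (p : {mpoly K[d]}) : Prop :=
  p \is 2.-homog /\
  exists q : 'I_3 -> {mpoly K[d]}, p = \sum_(k < 3) q k * tau v k.

Definition diagonal_pair (d : nat) (i j : 'I_d) : bool :=
  [&& j != i, j != ordS i & i != ordS j].

Definition in_D (K : ringType) (d : nat) (p : {mpoly K[d]}) : Prop :=
  exists c : 'I_d -> 'I_d -> K,
    p = \sum_(i < d) \sum_(j < d | diagonal_pair i j) c i j *: ('X_i * 'X_j).

Definition has_dim (K : ringType) (d : nat) (W : {mpoly K[d]} -> Prop)
  (n : nat) : Prop :=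
  exists b : 'I_n -> {mpoly K[d]},
    [/\ forall t, W (b t),
        (forall c : 'I_n -> K, \sum_(t < n) c t *: b t = 0 -> forall t, c t = 0)
      & forall p, W p -> exists c : 'I_n -> K, p = \sum_(t < n) c t *: b t].

From HB Require Import structures.
From mathcomp Require Import all_boot all_order all_algebra.
From mathcomp Require Import mpoly.
From mathcomp Require Import ring zify.
Set Implicit Arguments. Unset Strict Implicit. Unset Printing Implicit Defensive.
Import Order.TTheory GRing.Theory Num.Theory.
Local Open Scope ring_scope.

(** Write [V_i = (v_i, 1)] and an element of [(I_C)_2] as [sum_k q_k tau_k]
with [q_k = sum_j (u_j)_k x_j], so that its [x_a x_b] coefficient is
[V_a . u_b + V_b . u_a].  A linear relation [sum_i g_i V_i = 0] yields the
element with [u_j = V_j \times sum_(i < j) g_i V_i], which lies in [D]; the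
relations form a space of dimension [d - 3], and the [d - 3] relations
supported on [{t+1, d-2, d-1, 0}] give elements whose coefficients on the
short diagonals [x_j x_(j+2)] form an invertible diagonal system.
Conversely, if an element of [D] also vanishes on these short diagonals,
then the pairings [V_a . u_b + V_b . u_a] vanish on all adjacent and short
pairs of the cycle; since consecutive vertices are not collinear, this forces
[u_j = G V_j / det(V_0, V_1, V_2)] for one skew map [G] built from
[u_0, u_1, u_2], so all pairings, hence all coefficients, vanish. *)

Definition i0 : 'I_3 := @Ordinal 3 0 isT.
Definition i1 : 'I_3 := @Ordinal 3 1 isT.
Definition i2 : 'I_3 := @Ordinal 3 2 isT.

Lemma ord3_ind (P : 'I_3 -> Prop) : P i0 -> P i1 -> P i2 -> forall k, P k.
Proof.
move=> P0 P1 P2 [[|[|[|//]]] hk].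
- by rewrite (_ : Ordinal hk = i0) //; apply: val_inj.
- by rewrite (_ : Ordinal hk = i1) //; apply: val_inj.
- by rewrite (_ : Ordinal hk = i2) //; apply: val_inj.
Qed.

Lemma sum_ord3 (V : nmodType) (F : 'I_3 -> V) :
  \sum_(k < 3) F k = F i0 + F i1 + F i2.
Proof.
rewrite !big_ord_recr big_ord0 /= add0r.
by congr (F _ + F _ + F _); apply: val_inj.
Qed.

Section Vectors3.
Variable R : comNzRingType.
Implicit Types (a b c w : 'I_3 -> R).

Definition dot3 a b : R := \sum_(k < 3) a k * b k.

Definition det3 a b c : R :=
  a i0 * (b i1 * c i2 - b i2 * c i1) - a i1 * (b i0 * c i2 - b i2 * c i0)
  + a i2 * (b i0 * c i1 - b i1 * c i0).

Definition cross3 a b : 'I_3 -> R :=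
  fun k => match val k with
           | 0 => a i1 * b i2 - a i2 * b i1
           | 1 => a i2 * b i0 - a i0 * b i2
           | _ => a i0 * b i1 - a i1 * b i0 end.

Lemma dot3E a b : dot3 a b = a i0 * b i0 + a i1 * b i1 + a i2 * b i2.
Proof. exact: sum_ord3. Qed.

Lemma eq_dot3r a b b' : (forall k, b k = b' k) -> dot3 a b = dot3 a b'.
Proof. by move=> eq_b; apply: eq_bigr => k _; rewrite eq_b. Qed.

Lemma dot3Zr (x : R) a b : dot3 a (fun k => x * b k) = x * dot3 a b.
Proof. rewrite !dot3E; ring. Qed.

Lemma dot3_cross a b c : dot3 c (cross3 a b) = det3 a b c.
Proof. rewrite dot3E /cross3 /det3 /=; ring. Qed.

Lemma dot3_cross_self a b : dot3 a (cross3 a b) = 0.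
Proof. rewrite dot3_cross /det3; ring. Qed.

Lemma dot3_cross_sym a b a' b' :
  dot3 a (cross3 b b') + dot3 b (cross3 a a') = det3 a b (fun k => b' k - a' k).
Proof. rewrite !dot3_cross /det3; ring. Qed.

Lemma det3_swap23 a b c : det3 a c b = - det3 a b c.
Proof. rewrite /det3; ring. Qed.

Lemma det3_lincomb a b c w (x y z : R) :
  (forall k, w k = x * a k + y * b k + z * c k) -> det3 a b w = z * det3 a b c.
Proof. by move=> hw; rewrite /det3 !hw; ring. Qed.

(* Four vectors of R^3 are linearly dependent, with Cramer coefficients. *)
Lemma det3_relation a b c w k :
  det3 b c w * a k - det3 a c w * b k + det3 a b w * c k - det3 a b c * w k = 0.
Proof. by elim/ord3_ind: k; rewrite /det3; ring. Qed.

Lemma det3_mul_coord a b c w k :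
  det3 a b c * w k =
  dot3 a w * cross3 b c k + dot3 b w * cross3 c a k + dot3 c w * cross3 a b k.
Proof. by elim/ord3_ind: k; rewrite !dot3E /det3 /cross3 /=; ring. Qed.

End Vectors3.

Lemma eq_of_dot3 (R : idomainType) (a b c w w' : 'I_3 -> R) :
  det3 a b c != 0 -> dot3 a w = dot3 a w' -> dot3 b w = dot3 b w' ->
  dot3 c w = dot3 c w' -> forall k, w k = w' k.
Proof.
move=> nz ha hb hc k; apply: (mulfI nz).
by rewrite !det3_mul_coord ha hb hc.
Qed.

(* The linear map sending [v_i] to [det3 v0 v1 v2 * u_i] (Cramer's rule). *)
Definition cramer_map (R : comNzRingType) (v0 v1 v2 u0 u1 u2 x : 'I_3 -> R) :
    'I_3 -> R :=
  fun k => det3 x v1 v2 * u0 k + det3 v0 x v2 * u1 k + det3 v0 v1 x * u2 k.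

Section CramerMap.
Variables (R : comNzRingType) (v0 v1 v2 u0 u1 u2 : 'I_3 -> R).
Let G := cramer_map v0 v1 v2 u0 u1 u2.
Let D := det3 v0 v1 v2.

Lemma cramer_map_v0 k : G v0 k = D * u0 k.
Proof. rewrite /G /cramer_map /D /det3; ring. Qed.

Lemma cramer_map_v1 k : G v1 k = D * u1 k.
Proof. rewrite /G /cramer_map /D /det3; ring. Qed.

Lemma cramer_map_v2 k : G v2 k = D * u2 k.
Proof. rewrite /G /cramer_map /D /det3; ring. Qed.

Lemma cramer_map_skew_identity x y :
  D * (dot3 x (G y) + dot3 y (G x)) =
    2%:R * det3 x v1 v2 * det3 y v1 v2 * dot3 v0 u0
  + 2%:R * det3 v0 x v2 * det3 v0 y v2 * dot3 v1 u1
  + 2%:R * det3 v0 v1 x * det3 v0 v1 y * dot3 v2 u2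
  + (det3 y v1 v2 * det3 v0 x v2 + det3 x v1 v2 * det3 v0 y v2)
      * (dot3 v0 u1 + dot3 v1 u0)
  + (det3 y v1 v2 * det3 v0 v1 x + det3 x v1 v2 * det3 v0 v1 y)
      * (dot3 v0 u2 + dot3 v2 u0)
  + (det3 v0 y v2 * det3 v0 v1 x + det3 v0 x v2 * det3 v0 v1 y)
      * (dot3 v1 u2 + dot3 v2 u1).
Proof. rewrite /G /cramer_map /D !dot3E /det3; ring. Qed.

End CramerMap.

Lemma cramer_map_skew (R : idomainType) (v0 v1 v2 u0 u1 u2 : 'I_3 -> R) :
  det3 v0 v1 v2 != 0 ->
  dot3 v0 u0 = 0 -> dot3 v1 u1 = 0 -> dot3 v2 u2 = 0 ->
  dot3 v0 u1 + dot3 v1 u0 = 0 -> dot3 v0 u2 + dot3 v2 u0 = 0 ->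
  dot3 v1 u2 + dot3 v2 u1 = 0 ->
  forall x y, dot3 x (cramer_map v0 v1 v2 u0 u1 u2 y)
              + dot3 y (cramer_map v0 v1 v2 u0 u1 u2 x) = 0.
Proof.
move=> nz h00 h11 h22 h01 h02 h12 x y; apply: (mulfI nz).
rewrite cramer_map_skew_identity h00 h11 h22 h01 h02 h12.
by rewrite !mulr0 !addr0.
Qed.

Definition pairing (R : comNzRingType) (V u : nat -> 'I_3 -> R) (a b : nat) : R :=
  dot3 (V a) (u b) + dot3 (V b) (u a).

Lemma pairingC (R : comNzRingType) (V u : nat -> 'I_3 -> R) a b :
  pairing V u a b = pairing V u b a.
Proof. exact: addrC. Qed.

Section CyclicPairing.
Variables (R : numFieldType) (n : nat) (V u : nat -> 'I_3 -> R).
Hypotheses (n_ge3 : (3 <= n)%N)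
  (det_consec : forall m, (m + 2 <= n)%N -> det3 (V m) (V m.+1) (V m.+2) != 0)
  (det_wrap : det3 (V n.-1) (V n) (V 0) != 0)
  (pairing_self : forall a, (a <= n)%N -> dot3 (V a) (u a) = 0)
  (pairing_adj : forall m, (m < n)%N -> pairing V u m m.+1 = 0)
  (pairing_wrap : pairing V u n 0 = 0)
  (pairing_short : forall m, (m + 3 <= n)%N -> pairing V u m m.+2 = 0).

Let D := det3 (V 0) (V 1) (V 2).
Let G := cramer_map (V 0) (V 1) (V 2) (u 0) (u 1) (u 2).

Let D_neq0 : D != 0.
Proof. by apply: det_consec; lia. Qed.

Let G_skew x y : dot3 x (G y) + dot3 y (G x) = 0.
Proof.
apply: cramer_map_skew => //; try (apply: pairing_self; lia).
- by apply: pairing_adj; lia.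
- by apply: pairing_short; lia.
- by apply: pairing_adj; lia.
Qed.

Let G_alt x : dot3 x (G x) = 0.
Proof.
apply/eqP; have /eqP := G_skew x x.
by rewrite -mulr2n -mulr_natr mulf_eq0 pnatr_eq0 orbF.
Qed.

Let dot_transfer c m : (forall k, D * u c k = G (V c) k) -> pairing V u c m = 0 ->
  dot3 (V c) (fun k => D * u m k) = dot3 (V c) (G (V m)).
Proof.
move=> Gc; rewrite /pairing => /eqP; rewrite addr_eq0 => /eqP cm.
rewrite dot3Zr cm mulrN -dot3Zr (eq_dot3r _ Gc).
by apply/eqP; rewrite eq_sym -addr_eq0 G_skew.
Qed.

(* Each [u m] is pinned down by its dots with three consecutive vertices,
   which are all prescribed by the pairing relations. *)
Let G_interpolates m : (m <= n)%N -> forall k, D * u m k = G (V m) k.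
Proof.
elim/ltn_ind: m => m IH le_mn.
case: m IH le_mn => [|[|[|m]]] IH le_mn k.
- by rewrite /G cramer_map_v0.
- by rewrite /G cramer_map_v1.
- by rewrite /G cramer_map_v2.
have transfer c : (c < m.+3)%N -> pairing V u c m.+3 = 0 ->
    dot3 (V c) (fun k => D * u m.+3 k) = dot3 (V c) (G (V m.+3)).
  by move=> lt_c; apply: dot_transfer; apply: IH; lia.
have self : dot3 (V m.+3) (fun k => D * u m.+3 k) = dot3 (V m.+3) (G (V m.+3)).
  by rewrite dot3Zr pairing_self // mulr0 G_alt.
have [lt_mn | ge_mn] := ltnP m.+3 n.
- have det_m : det3 (V m.+1) (V m.+2) (V m.+3) != 0 by apply: det_consec; lia.
  apply: (eq_of_dot3 (w := fun k => D * u m.+3 k) (w' := G (V m.+3)) det_m).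
  + by apply: transfer => //; apply: pairing_short; lia.
  + by apply: transfer => //; apply: pairing_adj; lia.
  + exact: self.
- have en : n = m.+3 by lia.
  move: det_wrap pairing_wrap; rewrite en /= => det_w wrap.
  apply: (eq_of_dot3 (w := fun k => D * u m.+3 k) (w' := G (V m.+3)) det_w).
  + by apply: transfer => //; apply: pairing_adj; lia.
  + exact: self.
  + by apply: transfer => //; rewrite pairingC.
Qed.

Lemma pairing_vanishes a b : (a <= n)%N -> (b <= n)%N -> pairing V u a b = 0.
Proof.
move=> le_an le_bn; apply: (mulfI D_neq0).
rewrite mulr0 /pairing mulrDr -!dot3Zr.
by rewrite (eq_dot3r _ (G_interpolates le_bn)) (eq_dot3r _ (G_interpolates le_an)).
Qed.

End CyclicPairing.

Lemma sum_if2 (V : nmodType) (n : nat) (A B : 'I_n -> V) (a b : 'I_n) :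
  \sum_(l < n) (if l == a then A l else if l == b then B l else 0) =
  A a + (if b == a then 0 else B b).
Proof.
rewrite (bigD1 a) //= eqxx; congr (_ + _).
rewrite (eq_bigr (fun l => if l == b then B l else 0)); last first.
  by move=> l /negbTE ->.
case: eqP => [->|/eqP nba]; first by rewrite big1 // => l /negbTE ->.
by rewrite (bigD1 b) //= eqxx big1 ?addr0 // => l /andP[_ /negbTE ->].
Qed.

Section LinearForms.
Variables (R : nzRingType) (n : nat).

Definition linform (c : 'I_n -> R) : {mpoly R[n]} := \sum_(i < n) c i *: 'X_i.

Lemma mcoeff_linform (c : 'I_n -> R) (a : 'I_n) : (linform c)@_U_(a) = c a.
Proof.
rewrite raddf_sum (bigD1 a) //= mcoeffZ mcoeffXU eqxx mulr1.
by rewrite big1 ?addr0 // => j /negbTE nja; rewrite mcoeffZ mcoeffXU nja mulr0.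
Qed.

Lemma dhomogX1 (i : 'I_n) : ('X_i : {mpoly R[n]}) \is 1.-homog.
Proof. by rewrite dhomogX /= mdeg1. Qed.

Lemma dhomog_linform (c : 'I_n -> R) : linform c \is 1.-homog.
Proof. by apply: rpred_sum => i _; apply/rpredZ/dhomogX1. Qed.

End LinearForms.

Section QuadraticMPoly.
Variables (R : comNzRingType) (n : nat).
Implicit Types (p q : {mpoly R[n]}) (a b l : 'I_n).

Lemma mcoeffMX_U2 q l a b :
  (q * 'X_l)@_(U_(a) + U_(b))%MM =
  if l == a then q@_U_(b) else if l == b then q@_U_(a) else 0.
Proof.
case: eqP => [->|/eqP nla]; first by rewrite mcoeffMX.
case: eqP => [->|/eqP nlb]; first by rewrite addmC mcoeffMX.
apply: memN_msupp_eq0; rewrite (perm_mem (msuppMX q U_(l))).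
apply/mapP => -[m' _ /(congr1 (fun m : 'X_{1..n} => m l))].
by rewrite !mnmDE !mnm1E eqxx (eq_sym a) (eq_sym b) (negbTE nla) (negbTE nlb).
Qed.

Lemma mcoeff2_sum_mul_linform (q : 'I_3 -> {mpoly R[n]}) (V : 'I_n -> 'I_3 -> R) a b :
  (\sum_(k < 3) q k * linform (V^~ k))@_(U_(a) + U_(b))%MM =
  dot3 (V a) (fun k => (q k)@_U_(b)) +
  (if b == a then 0 else dot3 (V b) (fun k => (q k)@_U_(a))).
Proof.
have coef_k k : (q k * linform (V^~ k))@_(U_(a) + U_(b))%MM =
    V a k * (q k)@_U_(b) + (if b == a then 0 else V b k * (q k)@_U_(a)).
  rewrite mulr_sumr raddf_sum /=.
  rewrite -(sum_if2 (fun i => V i k * (q k)@_U_(b)) (fun i => V i k * (q k)@_U_(a))).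
  apply: eq_bigr => i _; rewrite -scalerAr mcoeffZ mcoeffMX_U2.
  by case: eqP => _; [|case: eqP => _]; rewrite ?mulr0.
rewrite raddf_sum /= (eq_bigr _ (fun k _ => coef_k k)) big_split /=.
by case: eqP => _; rewrite ?big1_eq.
Qed.

Definition quadform (F : 'I_n -> 'I_n -> R) : {mpoly R[n]} :=
  \sum_(i < n) \sum_(j < n) F i j *: ('X_i * 'X_j).

Lemma mcoeff_quadform (F : 'I_n -> 'I_n -> R) a b :
  (quadform F)@_(U_(a) + U_(b))%MM = F b a + (if b == a then 0 else F a b).
Proof.
have coef_i i : (\sum_(j < n) F i j *: ('X_i * 'X_j))@_(U_(a) + U_(b))%MM =
    (if i == b then F i a else 0) +
    (if b == a then 0 else if i == a then F i b else 0).
  rewrite raddf_sum /= -(sum_if2 (fun j => if i == b then F i j else 0)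
                                             (fun j => if i == a then F i j else 0)).
  apply: eq_bigr => j _; rewrite mcoeffZ mcoeffMX_U2 !mcoeffXU.
  by case: eqP => _; [|case: eqP => _]; case: (i == _); rewrite ?mulr0 ?mulr1.
rewrite raddf_sum /= (eq_bigr _ (fun i _ => coef_i i)) big_split /=.
rewrite -big_mkcond big_pred1_eq; congr (_ + _).
by case: eqP => _; rewrite ?big1_eq // -big_mkcond big_pred1_eq.
Qed.

Lemma dhomog_quadform (F : 'I_n -> 'I_n -> R) : quadform F \is 2.-homog.
Proof.
apply: rpred_sum => i _; apply: rpred_sum => j _; apply: rpredZ.
exact: (dhomogM (dhomogX1 R i) (dhomogX1 R j)).
Qed.

Lemma dhomog_sum_mul_linform (q : 'I_3 -> {mpoly R[n]}) (V : 'I_n -> 'I_3 -> R) :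
  (forall k, q k \is 1.-homog) -> \sum_(k < 3) q k * linform (V^~ k) \is 2.-homog.
Proof.
move=> hq; apply: rpred_sum => k _.
exact: (dhomogM (hq k) (dhomog_linform _)).
Qed.

Lemma mdeg2P (m : 'X_{1..n}) : mdeg m = 2%N -> exists a b, m = (U_(a) + U_(b))%MM.
Proof.
move=> deg_m.
have [a m_a] : exists a, (0 < m a)%N.
  case: (pickP (fun a => 0 < m a)%N) => [a ha|m0]; first by exists a.
  suff m_eq0 : m = 0%MM by move: deg_m; rewrite m_eq0 mdeg0.
  by apply/mnmP => i; rewrite mnmE; move/negbT: (m0 i); rewrite lt0n negbK => /eqP.
have le_am : (U_(a) <= m)%MM.
  by apply/mnm_lepP => i; rewrite mnm1E; case: eqP => [<-|].
have := submK le_am; set m' := (m - U_(a))%MM => em.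
have /eqP/mdeg1P [b /eqP m'b] : mdeg m' = 1%N.
  by move: deg_m; rewrite -em mdegD mdeg1 addn1 => -[].
by exists a, b; rewrite -em m'b addmC.
Qed.

Lemma dhomog2_eq p q : p \is 2.-homog -> q \is 2.-homog ->
  (forall a b, p@_(U_(a) + U_(b))%MM = q@_(U_(a) + U_(b))%MM) -> p = q.
Proof.
move=> hp hq eq_pq; apply/mpolyP => m.
have [/mdeg2P [a [b ->]] // | ne2] := eqVneq (mdeg m) 2%N.
by rewrite (dhomog_nemf_coeff hp ne2) (dhomog_nemf_coeff hq ne2).
Qed.

End QuadraticMPoly.

Lemma ordS_inord n m : (m < n)%N -> ordS (inord m : 'I_n.+1) = inord m.+1.
Proof.
move=> lt_mn; apply: val_inj => /=.
by rewrite !inordK ?modn_small //; lia.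
Qed.

Lemma ordS_inord_max n : ordS (inord n : 'I_n.+1) = inord 0.
Proof. by apply: val_inj => /=; rewrite !inordK // modnn. Qed.

Lemma eq_inord n a b : (a <= n)%N -> (b <= n)%N ->
  ((inord a : 'I_n.+1) == inord b) = (a == b).
Proof. by move=> le_an le_bn; rewrite -val_eqE /= !inordK. Qed.

Lemma ordS_cases n (a : 'I_n.+1) :
  (exists2 m, (m < n)%N & a = inord m /\ ordS a = inord m.+1) \/
  (a = inord n /\ ordS a = inord 0).
Proof.
have [lt_an | ge_an] := ltnP a n.
  left; exists (val a) => //; rewrite inord_val; split=> //.
  by rewrite -{1}(inord_val a) ordS_inord.
have a_max : a = inord n.
  by apply: val_inj; rewrite /= inordK //; have := ltn_ord a; lia.
by right; rewrite a_max ordS_inord_max.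
Qed.

Lemma not_diagonal_pair d (a b : 'I_d) : ~~ diagonal_pair a b -> b != a ->
  b = ordS a \/ a = ordS b.
Proof.
rewrite /diagonal_pair => /and3P not_diag ba.
have [->|ba'] := eqVneq b (ordS a); first by left.
have [->|ab'] := eqVneq a (ordS b); first by right.
by case: not_diag.
Qed.

Lemma diagonal_pairC d (a b : 'I_d) : diagonal_pair a b = diagonal_pair b a.
Proof. by rewrite /diagonal_pair eq_sym; congr (_ && _); apply: andbC. Qed.

Definition hvert (K : nzRingType) d (v : 'I_d -> K * K) (j : 'I_d) : 'I_3 -> K :=
  fun k => match val k with 0 => (v j).1 | 1 => (v j).2 | _ => 1 end.

Lemma det3_hvert (K : comNzRingType) d (v : 'I_d -> K * K) (a b c : 'I_d) :
  det3 (hvert v a) (hvert v b) (hvert v c) = orient (v a) (v b) (v c).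
Proof. rewrite /det3 /hvert /orient /=; ring. Qed.

Lemma convex_det3_neq0 (K : realFieldType) d (v : 'I_d -> K * K) :
  convex_polygon v -> forall i j, j != i -> j != ordS i ->
  det3 (hvert v i) (hvert v (ordS i)) (hvert v j) != 0.
Proof.
move=> convex i j ji jSi; rewrite det3_hvert.
by case: convex => side; have := side i j ji jSi; [apply: lt0r_neq0 | apply: ltr0_neq0].
Qed.

Section InIC2.
Variables (K : comNzRingType) (d : nat) (v : 'I_d -> K * K).

Lemma mcoeff_sum_mul_tau (q : 'I_3 -> {mpoly K[d]}) (a b : 'I_d) :
  (\sum_(k < 3) q k * tau v k)@_(U_(a) + U_(b))%MM =
  dot3 (hvert v a) (fun k => (q k)@_U_(b)) +
  (if b == a then 0 else dot3 (hvert v b) (fun k => (q k)@_U_(a))).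
Proof. exact: mcoeff2_sum_mul_linform. Qed.

Lemma in_D0 : in_D (0 : {mpoly K[d]}).
Proof.
exists (fun _ _ => 0).
by rewrite big1 // => i _; rewrite big1 // => j _; rewrite scale0r.
Qed.

Lemma in_DD (p p' : {mpoly K[d]}) : in_D p -> in_D p' -> in_D (p + p').
Proof.
move=> [c ->] [c' ->]; exists (fun i j => c i j + c' i j).
rewrite -big_split; apply: eq_bigr => i _.
by rewrite -big_split; apply: eq_bigr => j _; rewrite scalerDl.
Qed.

Lemma in_DZ (x : K) (p : {mpoly K[d]}) : in_D p -> in_D (x *: p).
Proof.
move=> [c ->]; exists (fun i j => x * c i j).
rewrite scaler_sumr; apply: eq_bigr => i _.
by rewrite scaler_sumr; apply: eq_bigr => j _; rewrite scalerA.
Qed.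

Lemma in_IC2_0 : in_IC2 v 0.
Proof.
split; first exact: rpred0.
by exists (fun _ => 0); rewrite big1 // => k _; rewrite mul0r.
Qed.

Lemma in_IC2D (p p' : {mpoly K[d]}) : in_IC2 v p -> in_IC2 v p' -> in_IC2 v (p + p').
Proof.
move=> [hp [q eq_p]] [hp' [q' eq_p']]; split; first exact: rpredD.
exists (fun k => q k + q' k).
by rewrite eq_p eq_p' -big_split; apply: eq_bigr => k _; rewrite mulrDl.
Qed.

Lemma in_IC2Z (x : K) (p : {mpoly K[d]}) : in_IC2 v p -> in_IC2 v (x *: p).
Proof.
move=> [hp [q eq_p]]; split; first exact: rpredZ.
exists (fun k => x *: q k).
by rewrite eq_p scaler_sumr; apply: eq_bigr => k _; rewrite scalerAl.
Qed.

Lemma in_D_IC2_lincomb m (p : {mpoly K[d]}) (b : 'I_m -> {mpoly K[d]}) (c : 'I_m -> K) :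
  in_D p /\ in_IC2 v p -> (forall t, in_D (b t) /\ in_IC2 v (b t)) ->
  in_D (p - \sum_(t < m) c t *: b t) /\ in_IC2 v (p - \sum_(t < m) c t *: b t).
Proof.
move=> [Dp Ip] Db; rewrite -scaleN1r.
have [Ds Is] : in_D (\sum_(t < m) c t *: b t) /\ in_IC2 v (\sum_(t < m) c t *: b t).
  apply: (big_ind (fun p => in_D p /\ in_IC2 v p)).
  - by split; [exact: in_D0 | exact: in_IC2_0].
  - by move=> ? ? [? ?] [? ?]; split; [exact: in_DD | exact: in_IC2D].
  - by move=> t _; have [? ?] := Db t; split; [exact: in_DZ | exact: in_IC2Z].
by split; [apply/in_DD/in_DZ | apply/in_IC2D/in_IC2Z].
Qed.

Lemma diagonal_sum_quadform (c : 'I_d -> 'I_d -> K) :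
  \sum_(i < d) \sum_(j < d | diagonal_pair i j) c i j *: ('X_i * 'X_j) =
  quadform (fun i j => if diagonal_pair i j then c i j else 0).
Proof.
apply: eq_bigr => i _; rewrite big_mkcond; apply: eq_bigr => j _.
by case: ifP; rewrite ?scale0r.
Qed.

Lemma in_D_mcoeff_nondiag (p : {mpoly K[d]}) (a b : 'I_d) :
  in_D p -> ~~ diagonal_pair a b -> p@_(U_(a) + U_(b))%MM = 0.
Proof.
move=> [c ->] not_diag; rewrite diagonal_sum_quadform mcoeff_quadform.
by rewrite diagonal_pairC (negbTE not_diag) add0r; case: eqP.
Qed.

End InIC2.

(* A linear relation [g] among the homogenized vertices gives a quadric
   [sum_j x_j (v_j \times b_j) . tau] in [I_C] with [b_j = sum_(i < j) g_i v_i].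
   Its [x_a x_b] coefficient is [det3 v_a v_b (b_b - b_a)], which vanishes on
   adjacent pairs since [b_(a+1) - b_a = g_a v_a], also cyclically because the
   [g_i v_i] sum to zero. *)
Section RelationQuadric.
Variables (K : comNzRingType) (n : nat) (v : 'I_n.+1 -> K * K) (g : 'I_n.+1 -> K).

Definition is_vertex_relation := forall k, \sum_(i < n.+1) g i * hvert v i k = 0.

Definition relation_partial (m : nat) : 'I_3 -> K :=
  fun k => \sum_(i < n.+1 | (i < m)%N) g i * hvert v i k.

Definition relation_quadric : {mpoly K[n.+1]} :=
  \sum_(k < 3) linform (fun j => cross3 (hvert v j) (relation_partial j) k) * tau v k.

Lemma relation_partial0 k : relation_partial 0 k = 0.
Proof. by rewrite /relation_partial big_pred0. Qed.

Lemma relation_partialS m k : (m <= n)%N ->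
  relation_partial m.+1 k = relation_partial m k + g (inord m) * hvert v (inord m) k.
Proof.
move=> le_mn; rewrite /relation_partial (bigD1 (inord m)) /=; last first.
  by rewrite inordK.
rewrite addrC; congr (_ + _); apply: eq_bigl => i.
by rewrite ltnS -val_eqE /= inordK // ltn_neqAle andbC.
Qed.

Lemma relation_partial_full k :
  relation_partial n.+1 k = \sum_(i < n.+1) g i * hvert v i k.
Proof. by rewrite /relation_partial; apply: eq_bigl => i; rewrite ltn_ord. Qed.

Lemma mcoeff_relation_quadric (a b : 'I_n.+1) :
  relation_quadric@_(U_(a) + U_(b))%MM =
  dot3 (hvert v a) (cross3 (hvert v b) (relation_partial b)) +
  (if b == a then 0 else dot3 (hvert v b) (cross3 (hvert v a) (relation_partial a))).
Proof.
rewrite mcoeff_sum_mul_tau; congr (_ + _).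
  by apply: eq_dot3r => k; rewrite mcoeff_linform.
by case: eqP => // _; apply: eq_dot3r => k; rewrite mcoeff_linform.
Qed.

Lemma relation_quadric_adj (a : 'I_n.+1) :
  is_vertex_relation -> relation_quadric@_(U_(a) + U_(ordS a))%MM = 0.
Proof.
move=> rel; rewrite mcoeff_relation_quadric.
have [Sa_a|_] := eqVneq (ordS a) a; first by rewrite Sa_a addr0 dot3_cross_self.
rewrite dot3_cross_sym.
rewrite (det3_lincomb (x := g a) (y := 0) (z := 0) (c := hvert v a)) ?mul0r //.
move=> k; rewrite mul0r !addr0.
have [[m lt_mn [-> ->]] | [-> ->]] := ordS_cases a.
  rewrite !inordK ?relation_partialS; try lia; ring.
have := rel k; rewrite -relation_partial_full relation_partialS // => /eqP.
rewrite addr_eq0 => /eqP full; rewrite !inordK // relation_partial0 full; ring.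
Qed.

Lemma relation_quadric_short j : (j + 2 <= n)%N ->
  relation_quadric@_(U_(inord j) + U_(inord j.+2))%MM =
  g (inord j.+1) *
  det3 (hvert v (inord j)) (hvert v (inord j.+2)) (hvert v (inord j.+1)).
Proof.
move=> le_jn; rewrite mcoeff_relation_quadric eq_inord; try lia.
rewrite (_ : (j.+2 == j) = false); last by apply/eqP; lia.
rewrite dot3_cross_sym; apply: (det3_lincomb (x := g (inord j)) (y := 0)) => k.
by rewrite !inordK; try lia; rewrite !relation_partialS; try lia; ring.
Qed.

Lemma relation_quadric_in_D : is_vertex_relation -> in_D relation_quadric.
Proof.
move=> rel; pose c i j := dot3 (hvert v j) (cross3 (hvert v i) (relation_partial i)).
exists c; rewrite diagonal_sum_quadform; apply: dhomog2_eq.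
- exact: dhomog_sum_mul_linform (fun k => dhomog_linform _).
- exact: dhomog_quadform.
move=> a b; rewrite mcoeff_quadform mcoeff_relation_quadric.
have [->|ba] := eqVneq b a; first by rewrite /diagonal_pair eqxx /= dot3_cross_self.
rewrite diagonal_pairC; case: (boolP (diagonal_pair a b)) => // not_diag.
rewrite /c add0r.
have [b_Sa|a_Sb] := not_diagonal_pair not_diag ba;
  [rewrite b_Sa in ba * | rewrite a_Sb in ba *].
- by have := relation_quadric_adj a rel; rewrite mcoeff_relation_quadric (negbTE ba).
- have := relation_quadric_adj b rel; rewrite mcoeff_relation_quadric.
  by rewrite eq_sym (negbTE ba) addrC.
Qed.

Lemma relation_quadric_in_IC2 : in_IC2 v relation_quadric.
Proof.
by split; [exact: dhomog_sum_mul_linform (fun k => dhomog_linform _) | eexists].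
Qed.

End RelationQuadric.

Section ShortRelation.
Variables (K : fieldType) (n : nat) (v : 'I_n.+1 -> K * K) (t : nat).

Let A := hvert v (inord t.+1).
Let B := hvert v (inord n.-1).
Let C := hvert v (inord n).
Let E := hvert v (inord 0).

(* The relation [det3_relation] among [v_(t+1), v_(n-1), v_n, v_0],
   normalized so that [v_(t+1)] has coefficient 1. *)
Definition short_relation (i : 'I_n.+1) : K :=
  ((i == inord t.+1)%:R * det3 B C E - (i == inord n.-1)%:R * det3 A C E
   + (i == inord n)%:R * det3 A B E - (i == inord 0)%:R * det3 A B C) / det3 B C E.

Lemma short_relationP : is_vertex_relation v short_relation.
Proof.
move=> k.
have delta (x : K) (a : 'I_n.+1) :
    \sum_(i < n.+1) (i == a)%:R * x * hvert v i k = x * hvert v a k.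
  by rewrite (bigD1 a) //= eqxx mul1r big1 ?addr0 // => i /negbTE ->; rewrite !mul0r.
rewrite /short_relation; under eq_bigr do rewrite mulrAC.
rewrite -mulr_suml; under eq_bigr do rewrite !(mulrDl, mulNr).
by rewrite !big_split /= !sumrN !delta -/A det3_relation mul0r.
Qed.

Lemma short_relation_val j : det3 B C E != 0 ->
  (t + 3 <= n)%N -> (0 < j)%N -> (j + 2 <= n)%N ->
  short_relation (inord j) = (j == t.+1)%:R.
Proof.
move=> nz le_tn j_gt0 le_jn; rewrite /short_relation !eq_inord; try lia.
have [-> -> ->] : [/\ (j == n.-1) = false, (j == n) = false & (j == 0) = false].
  by split; apply/eqP; lia.
by rewrite !mul0r subr0 addr0 subr0 mulfK.
Qed.

End ShortRelation.

Section Dimension.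
Variables (K : realFieldType) (n : nat) (v : 'I_n.+1 -> K * K).
Hypotheses (n_ge3 : (3 <= n)%N) (convex : convex_polygon v).

Let V m := hvert v (inord m).
Let N := (n.+1 - 3)%N.

Lemma det3_consecutive m : (m + 2 <= n)%N -> det3 (V m) (V m.+1) (V m.+2) != 0.
Proof.
move=> le_mn; rewrite /V -ordS_inord; last lia.
by apply: convex_det3_neq0; rewrite // ?ordS_inord ?eq_inord //; lia.
Qed.

Lemma det3_wrap : det3 (V n.-1) (V n) (V 0) != 0.
Proof.
have Sn : inord n = ordS (inord n.-1 : 'I_n.+1) by rewrite ordS_inord ?prednK //; lia.
by rewrite /V Sn; apply: convex_det3_neq0; rewrite // -?Sn eq_inord //; lia.
Qed.

Let short_det j := det3 (V j) (V j.+2) (V j.+1).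

Lemma short_det_neq0 j : (j + 2 <= n)%N -> short_det j != 0.
Proof. by move=> le_jn; rewrite /short_det det3_swap23 oppr_eq0 det3_consecutive. Qed.

Lemma in_D_IC2_eq0 (r : {mpoly K[n.+1]}) : in_D r -> in_IC2 v r ->
  (forall j, (j + 3 <= n)%N -> r@_(U_(inord j) + U_(inord j.+2))%MM = 0) -> r = 0.
Proof.
move=> Dr [hom [q eq_r]] short0.
pose u m k := (q k)@_U_(inord m : 'I_n.+1).
have coef a b : (a <= n)%N -> (b <= n)%N -> a != b ->
    r@_(U_(inord a) + U_(inord b))%MM = pairing V u a b.
  move=> le_an le_bn ab.
  by rewrite eq_r mcoeff_sum_mul_tau eq_inord // eq_sym (negbTE ab).
have self a : dot3 (V a) (u a) = 0.
  have := in_D_mcoeff_nondiag (a := inord a) (b := inord a) Dr.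
  by rewrite eq_r mcoeff_sum_mul_tau eqxx addr0 /diagonal_pair eqxx; apply.
have adj (a : 'I_n.+1) : r@_(U_(a) + U_(ordS a))%MM = 0.
  by apply: in_D_mcoeff_nondiag; rewrite // /diagonal_pair eqxx andbF.
have pairing0 : forall a b, (a <= n)%N -> (b <= n)%N -> pairing V u a b = 0.
  apply: pairing_vanishes => //.
  - exact: det3_consecutive.
  - exact: det3_wrap.
  - by move=> m lt_mn; rewrite -coef -?ordS_inord ?adj //; lia.
  - by rewrite -coef -?(ordS_inord_max n) ?adj //; lia.
  - by move=> m le_mn; rewrite -coef ?short0 //; lia.
apply: dhomog2_eq (rpred0 _) _ => // a b; rewrite mcoeff0 -(inord_val a) -(inord_val b).
have [<-|ab] := eqVneq (val a) (val b).
  by rewrite eq_r mcoeff_sum_mul_tau eqxx addr0 self.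
by rewrite coef ?pairing0 //; rewrite -ltnS.
Qed.

Definition short_basis (t : 'I_N) : {mpoly K[n.+1]} :=
  relation_quadric v (short_relation v t).

Lemma short_basis_in_D_IC2 t : in_D (short_basis t) /\ in_IC2 v (short_basis t).
Proof.
split; last exact: relation_quadric_in_IC2.
exact/relation_quadric_in_D/short_relationP.
Qed.

Lemma mcoeff_short_basis_comb (c : 'I_N -> K) (j : 'I_N) :
  (\sum_(t < N) c t *: short_basis t)@_(U_(inord j) + U_(inord j.+2))%MM =
  c j * short_det j.
Proof.
have lt_jN := ltn_ord j.
have coef_t (t : 'I_N) : (short_basis t)@_(U_(inord j) + U_(inord j.+2))%MM =
    (j == t :> nat)%:R * short_det j.
  have lt_tN := ltn_ord t.
  rewrite relation_quadric_short ?short_relation_val ?eqSS //; try lia.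
  exact: det3_wrap.
rewrite raddf_sum /= (bigD1 j) //= big1 ?addr0 => [|t tj].
  by rewrite mcoeffZ coef_t eqxx mul1r.
by rewrite mcoeffZ coef_t eq_sym val_eqE (negbTE tj) mul0r mulr0.
Qed.

Lemma short_basis_free (c : 'I_N -> K) :
  \sum_(t < N) c t *: short_basis t = 0 -> forall t, c t = 0.
Proof.
move=> comb0 t; have /eqP := mcoeff_short_basis_comb c t.
rewrite comb0 mcoeff0 eq_sym mulf_eq0 (negbTE (short_det_neq0 _)) ?orbF => [/eqP //|].
by have := ltn_ord t; rewrite /N; lia.
Qed.

Lemma short_basis_span (p : {mpoly K[n.+1]}) : in_D p /\ in_IC2 v p ->
  exists c : 'I_N -> K, p = \sum_(t < N) c t *: short_basis t.
Proof.
move=> Wp; pose c t := p@_(U_(inord t) + U_(inord t.+2))%MM / short_det t.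
exists c; apply/eqP; rewrite -subr_eq0; apply/eqP.
have [Dr Ir] := in_D_IC2_lincomb c Wp short_basis_in_D_IC2.
apply: in_D_IC2_eq0 => // j le_jn.
have lt_jN : (j < N)%N by rewrite /N; lia.
rewrite mcoeffB (mcoeff_short_basis_comb c (Ordinal lt_jN)) /c /= mulfVK ?subrr //.
by apply: short_det_neq0; lia.
Qed.

End Dimension.

Theorem lemma3p3 (K : realFieldType) (d : nat) (v : 'I_d -> K * K) :
  (4 <= d)%N ->
  convex_polygon v ->
  no_three_edge_lines_concurrent v ->
  has_dim (fun p : {mpoly K[d]} => in_D p /\ in_IC2 v p) (d - 3).
Proof.
case: d v => [//|n] v d_ge4 convex _.
exists (short_basis v); split.
- exact: short_basis_in_D_IC2.
- exact: short_basis_free.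
- exact: short_basis_span.
Qed.
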